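(* There is no functional $M_o$ of type level $3$, computable (Kleene S1–S9) in some type $2$ functional, such that $\mathsf{WPR}(M_o)$ holds.
   Context: $C=2^{\mathbb N}$; for $f\in C$, $\overline{f}n=\langle f(0),\dots,f(n-1)\rangle$ and $[\sigma]$ is the set of $g\in C$ extending $\sigma$. For $F,G:C\to\mathbb N$, $\mathsf{LOC}(F,G)$ means $(\forall f,g\in C)\big(g\in[\overline{f}G(f)]\to F(g)\le G(f)\big)$. $\mathsf{WPR}(M_o)$ (weak Pincherle realiser) means $(\forall F^2,G^2)\big(\mathsf{LOC}(F,G)\to(\forall f\in C)(F(f)\le M_o(F,G))\big)$. *)

From Stdlib Require Import List Arith.
From mathcomp Require Import ssreflect ssrbool ssrnat eqtype seq choice.
Import ListNotations.

Definition Cantor := nat -> bool.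

Definition in_nbhd (f : Cantor) (n : nat) (g : Cantor) : Prop :=
  forall i, (i < n)%coq_nat -> g i = f i.

Definition LOC (F G : Cantor -> nat) : Prop :=
  forall f g : Cantor, in_nbhd f (G f) g -> (F g <= G f)%coq_nat.

Definition WPR (Mo : (Cantor -> nat) -> (Cantor -> nat) -> nat) : Prop :=
  forall F G : Cantor -> nat, LOC F G -> forall f : Cantor, (F f <= Mo F G)%coq_nat.

(** Kleene computability S1-S9 for argument lists of types 0, 1, 2.
    An argument tuple is (ns, fs, Fs): type-0, type-1 and type-2 arguments.
    Indices are natural numbers, decoded by CodeSeq.decode as a list
    [tag; parameters...]. *)
Definition Type1 := nat -> nat.
Definition Type2 := (nat -> nat) -> nat.

Definition move_front {A : Type} (k : nat) (l : list A) : option (list A) :=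
  match List.nth_error l k with
  | Some a => Some (a :: (List.firstn k l ++ List.skipn (S k) l))
  | None => None
  end.

Inductive kleene : nat -> list nat -> list Type1 -> list Type2 -> nat -> Prop :=
| S1 e x ns fs Fs :
    CodeSeq.decode e = [:: 1] ->
    kleene e (x :: ns) fs Fs (S x)
| S2 e q ns fs Fs :
    CodeSeq.decode e = [:: 2; q] ->
    kleene e ns fs Fs q
| S3 e x ns fs Fs :
    CodeSeq.decode e = [:: 3] ->
    kleene e (x :: ns) fs Fs x
| S4 e e1 e2 ns fs Fs a b :
    CodeSeq.decode e = [:: 4; e1; e2] ->
    kleene e2 ns fs Fs a ->
    kleene e1 (a :: ns) fs Fs b ->
    kleene e ns fs Fs b
| S5_0 e e1 e2 ns fs Fs b :
    CodeSeq.decode e = [:: 5; e1; e2] ->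
    kleene e1 ns fs Fs b ->
    kleene e (0 :: ns) fs Fs b
| S5_S e e1 e2 x ns fs Fs a b :
    CodeSeq.decode e = [:: 5; e1; e2] ->
    kleene e (x :: ns) fs Fs a ->
    kleene e2 (a :: x :: ns) fs Fs b ->
    kleene e (S x :: ns) fs Fs b
(* S6: permutation of arguments of the same type
   (move the k-th argument of type t to the front; these generate all
   permutations) *)
| S6_0 e k e1 ns ns' fs Fs b :
    CodeSeq.decode e = [:: 6; 0; k; e1] ->
    move_front k ns = Some ns' ->
    kleene e1 ns' fs Fs b ->
    kleene e ns fs Fs b
| S6_1 e k e1 ns fs fs' Fs b :
    CodeSeq.decode e = [:: 6; 1; k; e1] ->
    move_front k fs = Some fs' ->
    kleene e1 ns fs' Fs b ->
    kleene e ns fs Fs b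
| S6_2 e k e1 ns fs Fs Fs' b :
    CodeSeq.decode e = [:: 6; 2; k; e1] ->
    move_front k Fs = Some Fs' ->
    kleene e1 ns fs Fs' b ->
    kleene e ns fs Fs b
| S7 e x ns f fs Fs :
    CodeSeq.decode e = [:: 7] ->
    kleene e (x :: ns) (f :: fs) Fs (f x)
| S8 e d ns fs F Fs (h : nat -> nat) :
    CodeSeq.decode e = [:: 8; d] ->
    (forall n, kleene d (n :: ns) fs (F :: Fs) (h n)) ->
    kleene e ns fs (F :: Fs) (F h)
| S9 e a ns fs Fs b :
    CodeSeq.decode e = [:: 9] ->
    kleene a ns fs Fs b ->
    kleene e (a :: ns) fs Fs b.

(* A functional F : C -> N is passed to a Kleene computation as the total
   type-2 functional  g |-> F (fun n => g n != 0)  (i.e. F applied to the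
   retraction min(1, g) of Baire space onto Cantor space). *)
Definition ext2 (F : Cantor -> nat) : Type2 :=
  fun g => F (fun n => g n != 0).

Definition computable_in
    (Mo : (Cantor -> nat) -> (Cantor -> nat) -> nat) (Phi : Type2) : Prop :=
  exists e : nat, forall F G : Cantor -> nat,
    kleene e [] [] [ext2 F; ext2 G; Phi] (Mo F G).

(* Suppose the index [e0] computes [Mo] from [Phi]. By Zorn's lemma there is a
   partial G, given by a graph [A], answering each point [c] that is asked during
   the computation by [k + 1], where [k] codes an S8 call asking [c]; by
   maximality every query gets answered as long as F answers 0 on the domain of
   [A]. The codes being natural numbers, a point [f] can differ from each such
   [c] at its bit [k]. If [M] is the output for F = 0, then F' := M + 1 at [f]
   and 0 elsewhere, together with G' := G extended by M + 1, satisfy LOC; but the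
   computation of [Mo F' G'] sees the same answers and still outputs [M] < F' f. *)

From Stdlib Require Import List.
From mathcomp Require Import ssreflect ssrfun ssrbool ssrnat eqtype seq choice.
From mathcomp Require Import boolp classical_sets.

Local Open Scope classical_set_scope.

Definition oracle := nat -> (nat -> nat) -> nat -> Prop.

Definition functional_oracle (o : oracle) := forall i h, is_subset1 (o i h).

(* Kleene computation without type-1 arguments (so without S6_1 and S7), whose
   type-2 arguments are labels [ix], answered by the relational oracle [o]. *)
Inductive kleene_rel (o : oracle) : nat -> list nat -> list nat -> nat -> Prop :=
| R1 e x ns ix : CodeSeq.decode e = [:: 1] -> kleene_rel o e (x :: ns) ix x.+1
| R2 e q ns ix : CodeSeq.decode e = [:: 2; q] -> kleene_rel o e ns ix q
| R3 e x ns ix : CodeSeq.decode e = [:: 3] -> kleene_rel o e (x :: ns) ix x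
| R4 e e1 e2 ns ix a b : CodeSeq.decode e = [:: 4; e1; e2] ->
    kleene_rel o e2 ns ix a -> kleene_rel o e1 (a :: ns) ix b ->
    kleene_rel o e ns ix b
| R5_0 e e1 e2 ns ix b : CodeSeq.decode e = [:: 5; e1; e2] ->
    kleene_rel o e1 ns ix b -> kleene_rel o e (0 :: ns) ix b
| R5_S e e1 e2 x ns ix a b : CodeSeq.decode e = [:: 5; e1; e2] ->
    kleene_rel o e (x :: ns) ix a -> kleene_rel o e2 (a :: x :: ns) ix b ->
    kleene_rel o e (x.+1 :: ns) ix b
| R6_0 e k e1 ns ns' ix b : CodeSeq.decode e = [:: 6; 0; k; e1] ->
    move_front k ns = Some ns' -> kleene_rel o e1 ns' ix b ->
    kleene_rel o e ns ix b
| R6_2 e k e1 ns ix ix' b : CodeSeq.decode e = [:: 6; 2; k; e1] ->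
    move_front k ix = Some ix' -> kleene_rel o e1 ns ix' b ->
    kleene_rel o e ns ix b
| R8 e d ns i ix h v : CodeSeq.decode e = [:: 8; d] ->
    (forall n, kleene_rel o d (n :: ns) (i :: ix) (h n)) -> o i h v ->
    kleene_rel o e ns (i :: ix) v
| R9 e a ns ix b : CodeSeq.decode e = [:: 9] ->
    kleene_rel o a ns ix b -> kleene_rel o e (a :: ns) ix b.

Lemma kleene_rel_mono {o o' : oracle} : (forall i h v, o i h v -> o' i h v) ->
  forall {e ns ix b}, kleene_rel o e ns ix b -> kleene_rel o' e ns ix b.
Proof.
move=> oo' e ns ix b; elim=> *;
  [ apply: R1 | apply: R2 | apply: R3 | apply: R4 | apply: R5_0 | apply: R5_S
  | apply: R6_0 | apply: R6_2 | apply: R8 | apply: R9 ]; eauto.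
Qed.

Ltac unify_same_code :=
  repeat match goal with
  | H1 : CodeSeq.decode ?e = _, H2 : CodeSeq.decode ?e = _ |- _ =>
      rewrite H1 in H2; case: H2 => *; subst
  | H1 : move_front ?k ?l = _, H2 : move_front ?k ?l = _ |- _ =>
      rewrite H1 in H2; case: H2 => *; subst
  end.

Lemma kleene_rel_fun {o : oracle} : functional_oracle o ->
  forall {e ns ix b b'}, kleene_rel o e ns ix b -> kleene_rel o e ns ix b' -> b = b'.
Proof.
move=> ofun e ns ix b b' H; elim: H b' => {e ns ix b}
  [e x ns ix De | e q ns ix De | e x ns ix De
  | e e1 e2 ns ix a b De _ IHa _ IHb | e e1 e2 ns ix b De _ IHb
  | e e1 e2 x ns ix a b De _ IHa _ IHb | e k e1 ns ns' ix b De Mns _ IHb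
  | e k e1 ns ix ix' b De Mix _ IHb | e d ns i ix h v De _ IHh ov
  | e a ns ix b De _ IHb] b' H'; inversion H'; subst; unify_same_code; try done.
all: repeat match goal with
  | IH : forall b', kleene_rel _ ?e ?ns ?ix b' -> _ = b',
    H : kleene_rel _ ?e ?ns ?ix _ |- _ => move/IH: H => ?; subst
  end; try done.
match goal with
| Hh : forall n, kleene_rel _ _ _ _ (?h' n), _ : o i ?h' b' |- _ =>
    have eq_h : h = h' by apply: funext => n; exact: IHh _ _ (Hh n)
end.
by subst; apply: (ofun _ _ _ _ ov).
Qed.

Lemma move_front_map (A B : Type) (g : A -> B) k l :
  move_front k (map g l) = option_map (map g) (move_front k l).
Proof.
rewrite /move_front nth_error_map firstn_map skipn_map.
by case: (List.nth_error l k) => //= a; rewrite map_cat.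
Qed.

Definition answers_queries (o : oracle) := forall e d ns i ix h,
  CodeSeq.decode e = [:: 8; d] ->
  (forall n, kleene_rel o d (n :: ns) (i :: ix) (h n)) -> exists v, o i h v.

Lemma kleene_rel_of_kleene {o : oracle} {T : nat -> Type2} :
  answers_queries o -> (forall i h v, o i h v -> T i h = v) ->
  forall {e ns} ix {b}, kleene e ns [::] (map T ix) b -> kleene_rel o e ns ix b.
Proof.
move=> ans oT e ns ix b H.
move Efs: [::] H => fs; move ETix: (map T ix) => Fs H.
elim: H ix Efs ETix => {e ns fs Fs b}
  [e x ns fs Fs De | e q ns fs Fs De | e x ns fs Fs De
  | e e1 e2 ns fs Fs a b De _ IHa _ IHb | e e1 e2 ns fs Fs b De _ IHb
  | e e1 e2 x ns fs Fs a b De _ IHa _ IHb | e k e1 ns ns' fs Fs b De Mns _ IHb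
  | e k e1 ns fs fs' Fs b De Mfs _ IHb | e k e1 ns fs Fs Fs' b De MFs _ IHb
  | e x ns f fs Fs De | e d ns fs F Fs h De _ IHh | e a ns fs Fs b De _ IHb]
  ix Efs ETix; subst.
- exact: R1.
- exact: R2.
- exact: R3.
- exact: R4 De (IHa _ erefl erefl) (IHb _ erefl erefl).
- exact: R5_0 De (IHb _ erefl erefl).
- exact: R5_S De (IHa _ erefl erefl) (IHb _ erefl erefl).
- exact: R6_0 De Mns (IHb _ erefl erefl).
- by case: k De Mfs.
- move: MFs; rewrite move_front_map.
  case Mix: (move_front k ix) => [ix'|] //= [map_ix'].
  rewrite -map_ix' in IHb; exact: R6_2 De Mix (IHb _ erefl erefl).
- by [].
- case: ix ETix IHh => [|i ix] //= [<- <-] IHh.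
  have calls n : kleene_rel o d (n :: ns) (i :: ix) (h n) by exact: IHh.
  have [v ov] := ans _ _ _ _ _ _ De calls.
  by rewrite (oT _ _ _ ov); apply: R8 De calls ov.
- exact: R9 De (IHb _ erefl erefl).
Qed.

Definition to_cantor (h : nat -> nat) : Cantor := fun n => h n != 0.

Definition query_code (e : nat) (ns ix : list nat) : nat :=
  CodeSeq.code [:: e; CodeSeq.code ns; CodeSeq.code ix].

Lemma query_code_inj e ns ix e' ns' ix' :
  query_code e ns ix = query_code e' ns' ix' -> [/\ e = e', ns = ns' & ix = ix'].
Proof.
move/(congr1 CodeSeq.decode); rewrite !CodeSeq.codeK => -[-> code_ns code_ix].
by split=> //; apply: (can_inj CodeSeq.codeK).
Qed.

Definition query (o : oracle) e ns ix (h : nat -> nat) := exists d,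
  CodeSeq.decode e = [:: 8; d] /\ forall n, kleene_rel o d (n :: ns) ix (h n).

Definition queried (o : oracle) (k : nat) (c : Cantor) := exists e ns ix h,
  [/\ k = query_code e ns ix, query o e ns ix h & c = to_cantor h].

Lemma queried_mono {o o' : oracle} : (forall i h v, o i h v -> o' i h v) ->
  forall {k c}, queried o k c -> queried o' k c.
Proof.
move=> oo' k c [e [ns [ix [h [-> [d [De calls]] ->]]]]].
exists e, ns, ix, h; split=> //; exists d; split=> // n.
exact: (kleene_rel_mono oo' (calls n)).
Qed.

Lemma queried_fun {o : oracle} : functional_oracle o ->
  forall k, is_subset1 (queried o k).
Proof.
move=> ofun k _ _ [e [ns [ix [h [-> [d [De calls]] ->]]]]]
  [e' [ns' [ix' [h' [/query_code_inj [<- <- <-] [d' [De' calls']] ->]]]]].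
move: De'; rewrite De => -[eq_d]; subst d'.
congr to_cantor; apply: funext => n.
exact: (kleene_rel_fun ofun (calls n) (calls' n)).
Qed.

Definition graph := set (Cantor * nat).

Definition graph_dom (A : graph) (c : Cantor) := exists v, A (c, v).

Definition functional_graph (A : graph) := forall c, is_subset1 (fun v => A (c, v)).

(* Label 0 is F, answering 0 but only on the domain of [A]; label 1 is G,
   answering along [A]; every other label is [Phi]. *)
Definition graph_oracle (Phi : Type2) (A : graph) : oracle := fun i h v =>
  match i with
  | 0 => v = 0 /\ graph_dom A (to_cantor h)
  | 1 => A (to_cantor h, v)
  | _ => v = Phi h
  end.

Lemma graph_oracle_mono {Phi : Type2} {A B : graph} : A `<=` B ->
  forall i h v, graph_oracle Phi A i h v -> graph_oracle Phi B i h v.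
Proof.
move=> AB [|[|i]] h v //=; last exact: AB.
by case=> -> [w Aw]; split=> //; exists w; apply: AB.
Qed.

Lemma graph_oracle_fun {Phi : Type2} {A : graph} :
  functional_graph A -> functional_oracle (graph_oracle Phi A).
Proof.
by move=> Afun [|[|i]] h v v' /=; [case=> -> _ [-> _] | apply: Afun | move=> -> ->].
Qed.

Section AdmissibleGraphs.
Variable Phi : Type2.

(* [G c = k.+1] with [k] the code of an S8 call asking [c]: the bit [k], where the
   diagonal point will differ from [c], then lies in the prefix of length [G c]. *)
Definition admissible (A : graph) := functional_graph A /\
  forall c v, A (c, v) -> exists k, v = k.+1 /\ queried (graph_oracle Phi A) k c.

Lemma admissible_bigcup (F : set graph) : F `<=` admissible ->
  total_on F subset -> admissible (\bigcup_(A in F) A).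
Proof.
move=> Fadm Ftot; split.
  move=> c v v' [A FA Av] [B FB Bv']; case: (Ftot A B FA FB) => [AB|BA].
  - exact: (Fadm B FB).1 c v v' (AB _ Av) Bv'.
  - exact: (Fadm A FA).1 c v v' Av (BA _ Bv').
move=> c v [A FA Av]; have [k [-> Ak]] := (Fadm A FA).2 c v Av.
exists k; split=> //; apply: queried_mono Ak; apply: graph_oracle_mono.
exact: bigcup_sup.
Qed.

Lemma admissible_add_query {A : graph} {e ns ix h} :
  admissible A -> ~ graph_dom A (to_cantor h) ->
  query (graph_oracle Phi A) e ns ix h ->
  admissible (A `|` [set (to_cantor h, (query_code e ns ix).+1)]).
Proof.
move=> [Afun Avals] notdom qh.
have AB := @subsetUl _ A [set (to_cantor h, (query_code e ns ix).+1)].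
split.
  move=> c v v' [Av|[eq_c ->]] [Av'|[eq_c' ->]] //.
  - exact: Afun Av Av'.
  - by case: notdom; exists v; rewrite -eq_c'.
  - by case: notdom; exists v'; rewrite -eq_c.
move=> c v [/Avals [k [-> Ak]]|[-> ->]].
  by exists k; split=> //; apply: queried_mono Ak; apply: graph_oracle_mono.
exists (query_code e ns ix); split=> //; exists e, ns, ix, h; split=> //.
case: qh => d [De calls]; exists d; split=> // n.
exact: (kleene_rel_mono (graph_oracle_mono AB) (calls n)).
Qed.

Lemma maximal_admissible_answers (A : graph) : admissible A ->
  (forall B, A `<` B -> ~ admissible B) -> answers_queries (graph_oracle Phi A).
Proof.
move=> adm Amax e d ns i ix h De calls.
have [w Aw] : graph_dom A (to_cantor h).
  apply: contrapT => notdom.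
  have qh : query (graph_oracle Phi A) e ns (i :: ix) h by exists d.
  apply: Amax (admissible_add_query adm notdom qh); split; first exact: subsetUl.
  by move=> BA; apply: notdom; eexists; apply: BA; right.
by case: i calls => [|[|i]] _; [exists 0; split=> //; exists w | exists w | exists (Phi h)].
Qed.

Lemma exists_admissible_answering :
  exists A, admissible A /\ answers_queries (graph_oracle Phi A).
Proof.
have [A [adm Amax]] := Zorn_bigcup admissible_bigcup.
by exists A; split; last exact: maximal_admissible_answers.
Qed.

End AdmissibleGraphs.

Section Diagonalization.
Variables (Phi : Type2) (A : graph).
Hypotheses (adm : admissible Phi A) (ans : answers_queries (graph_oracle Phi A)).

Local Notation o := (graph_oracle Phi A).

Definition diagonal : Cantor :=
  fun k => ~~ `[< exists c, queried o k c /\ c k >].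

Lemma diagonal_avoids c v : A (c, v) -> exists k, v = k.+1 /\ diagonal k != c k.
Proof.
move=> Av; have [k [-> qk]] := adm.2 c v Av; exists k; split=> //; rewrite /diagonal.
have -> : `[< exists c', queried o k c' /\ c' k >] = c k.
  apply/asboolP/idP => [[c' [qk' c'k]] | ck]; last by exists c.
  by rewrite -(queried_fun (graph_oracle_fun adm.1) k _ _ qk' qk).
by case: (c k).
Qed.

Lemma diagonal_not_in_dom : ~ graph_dom A diagonal.
Proof. by move=> [v /diagonal_avoids [k [_]]]; rewrite eqxx. Qed.

Definition extension (d : nat) : Cantor -> nat :=
  fun_of_rel (fun _ => d) (fun c v => A (c, v)).

Lemma extension_graph d c v : A (c, v) -> extension d c = v.
Proof. exact: fun_of_rel_uniq (adm.1 c) v. Qed.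

Lemma extension_off_dom d c : ~ graph_dom A c -> extension d c = d.
Proof. by move=> notdom; apply: xgetPN => v Av; apply: notdom; exists v. Qed.

Lemma graph_oracle_agrees (F : Cantor -> nat) d :
  (forall c, graph_dom A c -> F c = 0) ->
  forall i h v, o i h v -> nth Phi [:: ext2 F; ext2 (extension d)] i h = v.
Proof.
move=> F0 [|[|i]] h v /=; first by case=> -> /F0.
  exact: extension_graph.
by rewrite nth_nil => ->.
Qed.

Lemma kleene_extension_invariant (F F' : Cantor -> nat) d d' e ns b b' :
  (forall c, graph_dom A c -> F c = 0) -> (forall c, graph_dom A c -> F' c = 0) ->
  kleene e ns [::] [:: ext2 F; ext2 (extension d); Phi] b ->
  kleene e ns [::] [:: ext2 F'; ext2 (extension d'); Phi] b' -> b = b'.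
Proof.
move=> F0 F'0 /(kleene_rel_of_kleene ans (graph_oracle_agrees F d F0) [:: 0; 1; 2]) Hb.
move=> /(kleene_rel_of_kleene ans (graph_oracle_agrees F' d' F'0) [:: 0; 1; 2]) Hb'.
exact: (kleene_rel_fun (graph_oracle_fun adm.1) Hb Hb').
Qed.

Definition spike (N : nat) : Cantor -> nat :=
  fun g => if pselect (g = diagonal) then N else 0.

Lemma spike_diagonal N : spike N diagonal = N.
Proof. by rewrite /spike; case: pselect. Qed.

Lemma spike_off_dom N c : graph_dom A c -> spike N c = 0.
Proof.
by rewrite /spike; case: pselect => //= eq_c; rewrite eq_c => /diagonal_not_in_dom.
Qed.

Lemma LOC_spike N : LOC (spike N) (extension N).
Proof.
move=> c g; rewrite /spike; case: pselect => [eq_g|_] /= near; last exact: le_0_n.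
subst g.
have [[v Av]|notdom] := pselect (graph_dom A c); last by rewrite extension_off_dom.
have [k [eq_v /eqP[]]] := diagonal_avoids _ _ Av; apply: near.
by rewrite (extension_graph _ _ _ Av) eq_v; apply/ltP.
Qed.

End Diagonalization.

Theorem theorem3p14 :
  ~ exists (Mo : (Cantor -> nat) -> (Cantor -> nat) -> nat) (Phi : Type2),
      computable_in Mo Phi /\ WPR Mo.
Proof.
move=> [Mo [Phi [[e0 compMo] WPR_Mo]]].
have [A [adm ans]] := exists_admissible_answering Phi.
pose M := Mo (fun _ => 0) (extension A 0).
have := WPR_Mo _ _ (LOC_spike Phi A adm M.+1) (diagonal Phi A).
have <- : M = Mo (spike Phi A M.+1) (extension A M.+1).
  apply: (kleene_extension_invariant Phi A adm ans) (compMo _ _) (compMo _ _) => //.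
  exact: spike_off_dom.
by rewrite spike_diagonal => /leP; rewrite ltnn.
Qed.
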